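(* Let $n\ge3$, $-2<l<0$, $1<p\le p_*=\frac{n+2+2l}{n-2}$, and let $f$ satisfy $(f_1)$, $(f_2)$, $(f_2')$. Assume there exist positive numbers $r_0,C_1$ such that $f(r)\ge C_1 r^{l}$ for $r>r_0$. Then there exists a constant $C>0$, independent of $\alpha$, such that whenever $u(r;\alpha)$ (for any $0<\alpha<\infty$) is a positive entire solution (i.e. $u(r;\alpha)>0$ for all $r\ge0$), it satisfies $u(r;\alpha)\le C r^{\frac{2-n}{2}}$ for all $r\ge r_0$.
   Context: Standing hypotheses: $(f_1)$ $f\in C(0,\infty)$, $f(r)>0$ for $r>0$; $(f_2)$ $f(r)=O(r^l)$ as $r\to\infty$; $(f_2')$ $f(r)=O(r^\sigma)$ as $r\to0$, $\sigma>-2$. For $\alpha>0$, $u(r;\alpha)$ is the unique solution of (1.4) $u''+\frac{n-1}{r}u'+f(r)(u^+)^p=0$, $u(0;\alpha)=\alpha$, $u'(0;\alpha)=0$, $u^+=\max\{u,0\}$; it corresponds to the radial solution $u(|x|)$ of $-\Delta u=f(|x|)u^p$ on $\mathbb R^n$. *)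

From Stdlib Require Import Reals.
From Coquelicot Require Import Coquelicot.
Open Scope R_scope.

Definition pospow (x q : R) : R := if Rlt_dec 0 x then Rpower x q else 0.

Definition upos (x : R) : R := Rmax x 0.

(* u is a solution of (1.4):
   u'' + (n-1)/r u' + f(r) (u^+)^p = 0 on (0,oo), u(0) = alpha, u'(0) = 0.
   Since f may be singular at r = 0 (f = O(r^sigma), sigma > -2), the initial
   conditions are imposed as: u(0) = alpha, u continuous at 0 from the right,
   and u'(r) -> 0 as r -> 0+. *)
Definition radial_sol (n : nat) (f : R -> R) (p alpha : R) (u : R -> R) : Prop :=
  u 0 = alpha /\
  filterlim u (at_right 0) (locally alpha) /\
  exists du : R -> R,
    (forall r, 0 < r -> is_derive u r (du r)) /\
    filterlim du (at_right 0) (locally 0) /\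
    (forall r, 0 < r ->
       is_derive du r (- ((INR n - 1) / r) * du r - f r * pospow (upos (u r)) p)).

Definition p_star (n : nat) (l : R) : R := (INR n + 2 + 2 * l) / (INR n - 2).

From Stdlib Require Import Reals Lra Lia.
From Coquelicot Require Import Coquelicot.
Open Scope R_scope.

(* Writing [v(r) = -r^(n-1) u'(r)], the equation reads [v' = r^(n-1) f u^p >= 0] and
   [v(0+) = 0], so [v >= 0] is nondecreasing and [u] is nonincreasing.  On [[r, 2r]] the
   bound [f >= C1 r^l] makes [v] grow by at least [C1 (2r)^l r^n u(2r)^p], while the
   positivity of [u(3r)] limits the fall of [u] on [[2r, 3r]], i.e. [r v(2r) < 3^(n-1)
   r^(n-1) u(2r)].  Together [u(2r)^(p-1) < K r^-(2+l)]; the same bound on [v(2r)] also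
   gives [u(r) <= (1 + 3^(n-1)) u(2r)].  Hence [u(r) <= C r^(-(2+l)/(p-1))] with [C]
   independent of [alpha], and [p <= p_*] says exactly [-(2+l)/(p-1) <= (2-n)/2]. *)

Lemma Rpower_pos x y : 0 < Rpower x y.
Proof. apply exp_pos. Qed.

Lemma Rle_Rpower_l_npos a b c : c <= 0 -> 0 < a <= b -> Rpower b c <= Rpower a c.
Proof.
  intros Hc Hab.
  replace c with (- - c) by ring. rewrite !(Rpower_Ropp _ (- c)).
  apply Rinv_le_contravar; [apply Rpower_pos |].
  apply Rle_Rpower_l; lra.
Qed.

Lemma Rpower_lt_root x y a q s : 0 < x -> 0 < y -> 0 < a -> 0 < q ->
  Rpower x q < a * Rpower y s -> x < Rpower a (/ q) * Rpower y (s / q).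
Proof.
  intros Hx Hy Ha Hq Hlt.
  replace x with (Rpower (Rpower x q) (/ q)).
  2: { rewrite Rpower_mult, Rinv_r, Rpower_1 by lra; reflexivity. }
  unfold Rdiv. rewrite <- Rpower_mult, Rpower_mult_distr by (auto; apply Rpower_pos).
  apply Rlt_Rpower_l; [apply Rinv_0_lt_compat; lra |].
  split; [apply Rpower_pos | exact Hlt].
Qed.

Lemma is_derive_increment_ge (g dg : R -> R) (c a b : R) : a <= b ->
  (forall x, a <= x <= b -> is_derive g x (dg x)) ->
  (forall x, a < x < b -> c <= dg x) -> c * (b - a) <= g b - g a.
Proof.
  intros Hab Hd Hc. destruct (Req_dec a b) as [<- | Hne]; [lra |].
  destruct (MVT_cor2 g dg a b) as [x [Hx Hx']]; [lra | |].
  - intros x Hx; apply is_derive_Reals; auto.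
  - rewrite Hx. apply Rmult_le_compat_r; [lra | apply Hc; exact Hx'].
Qed.

Lemma pospow_upos x p : 0 < x -> pospow (upos x) p = Rpower x p.
Proof.
  intros Hx. unfold pospow, upos. rewrite Rmax_left by lra.
  destruct (Rlt_dec 0 x); [reflexivity | lra].
Qed.

(* For [n = S m], [flux m du] is [v(r) = -r^(n-1) u'(r)]. *)
Definition flux (m : nat) (du : R -> R) (t : R) : R := - (t ^ m * du t).

Section RadialSolution.

Variables (m : nat) (f u du : R -> R) (p : R).
Hypothesis p_nonneg : 0 <= p.
Hypothesis f_pos : forall r, 0 < r -> 0 < f r.
Hypothesis u_pos : forall r, 0 < r -> 0 < u r.
Hypothesis u_deriv : forall r, 0 < r -> is_derive u r (du r).
Hypothesis du_deriv : forall r, 0 < r ->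
  is_derive du r (- ((INR (S m) - 1) / r) * du r - f r * pospow (upos (u r)) p).
Hypothesis du_lim0 : filterlim du (at_right 0) (locally 0).

Lemma flux_deriv s : 0 < s -> is_derive (flux m du) s (s ^ m * f s * Rpower (u s) p).
Proof.
  intros Hs.
  pose proof (is_derive_opp _ _ _ (is_derive_mult _ _ _ _ _
    (is_derive_pow _ m _ _ (is_derive_id s)) (du_deriv s Hs) Rmult_comm)) as H.
  rewrite pospow_upos in H by auto.
  replace (s ^ m * f s * Rpower (u s) p) with
    (opp (plus (mult (INR m * 1 * s ^ Nat.pred m) (du s))
       (mult (s ^ m) (- ((INR (S m) - 1) / s) * du s - f s * Rpower (u s) p)))).
  - exact H.
  - rewrite S_INR. destruct m as [|k]; simpl pred; simpl pow;
      unfold opp, plus, mult; simpl; field; lra.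
Qed.

Lemma flux_nondecreasing a b : 0 < a <= b -> flux m du a <= flux m du b.
Proof.
  intros Hab.
  enough (0 * (b - a) <= flux m du b - flux m du a) by lra.
  apply (is_derive_increment_ge (flux m du) (fun s => s ^ m * f s * Rpower (u s) p)); [lra | |].
  - intros x Hx; apply flux_deriv; lra.
  - intros x Hx.
    assert (0 < x ^ m) by (apply pow_lt; lra).
    assert (0 < f x) by (apply f_pos; lra).
    pose proof (Rpower_pos (u x) p).
    apply Rmult_le_pos; [apply Rmult_le_pos |]; lra.
Qed.

(* Were [flux s < 0], monotonicity would give [u' >= - flux s > 0] on [(0, min s 1)],
   against [u'(0+) = 0]. *)
Lemma flux_nonneg s : 0 < s -> 0 <= flux m du s.
Proof.
  intros Hs. destruct (Rle_lt_dec 0 (flux m du s)) as [| Hneg]; [assumption | exfalso].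
  assert (Hevent : at_right 0 (fun t => - flux m du s <= du t)).
  { exists (mkposreal (Rmin s 1) (Rmin_pos _ _ Hs Rlt_0_1)).
    intros t Hball Ht.
    apply Rabs_def2 in Hball. rewrite Rminus_0_r in Hball. simpl in Hball.
    pose proof (Rmin_l s 1). pose proof (Rmin_r s 1).
    assert (Htm : 0 < t ^ m <= 1).
    { split; [apply pow_lt; lra | rewrite <- (pow1 m); apply pow_incr; lra]. }
    pose proof (flux_nondecreasing t s ltac:(lra)) as Hts. unfold flux in Hts, Hneg |- *.
    assert (Hdu : 0 < du t) by nra.
    assert ((1 - t ^ m) * du t >= 0) by nra.
    nra. }
  pose proof (filterlim_le (F := at_right 0) (fun _ => - flux m du s) du
    (- flux m du s) 0 Hevent (filterlim_const _) du_lim0) as H.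
  simpl in H. lra.
Qed.

Lemma neg_du_eq_flux x : 0 < x -> - du x = flux m du x / x ^ m.
Proof. intros Hx. unfold flux. field. apply pow_nonzero. lra. Qed.

Lemma u_decrement_ge a b : 0 < a <= b -> flux m du a / b ^ m * (b - a) <= u a - u b.
Proof.
  intros Hab.
  enough (flux m du a / b ^ m * (b - a) <= - u b - - u a) by lra.
  apply (is_derive_increment_ge (fun t => - u t) (fun t => - du t)); [lra | |].
  - intros x Hx. apply (is_derive_opp u), u_deriv. lra.
  - intros x Hx. rewrite neg_du_eq_flux by lra.
    pose proof (flux_nonneg a ltac:(lra)).
    pose proof (flux_nondecreasing a x ltac:(lra)).
    assert (0 < x ^ m) by (apply pow_lt; lra).
    assert (x ^ m <= b ^ m) by (apply pow_incr; lra).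
    apply Rmult_le_compat; [lra | left; apply Rinv_0_lt_compat; lra | lra |].
    apply Rinv_le_contravar; lra.
Qed.

Lemma u_nonincreasing a b : 0 < a <= b -> u b <= u a.
Proof.
  intros Hab. pose proof (u_decrement_ge a b Hab).
  pose proof (flux_nonneg a ltac:(lra)).
  assert (0 < b ^ m) by (apply pow_lt; lra).
  enough (0 <= flux m du a / b ^ m * (b - a)) by lra.
  apply Rmult_le_pos; [apply Rmult_le_pos; [lra | left; apply Rinv_0_lt_compat; lra] | lra].
Qed.

Lemma u_decrement_le a b : 0 < a <= b -> u a - u b <= flux m du b / a ^ m * (b - a).
Proof.
  intros Hab.
  enough (- (flux m du b / a ^ m) * (b - a) <= u b - u a) by lra.
  apply (is_derive_increment_ge u du); [lra | intros x Hx; apply u_deriv; lra |].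
  intros x Hx.
  enough (flux m du x / x ^ m <= flux m du b / a ^ m) by (rewrite <- neg_du_eq_flux in *; lra).
  pose proof (flux_nonneg x ltac:(lra)).
  pose proof (flux_nondecreasing x b ltac:(lra)).
  assert (0 < a ^ m) by (apply pow_lt; lra).
  assert (a ^ m <= x ^ m) by (apply pow_incr; lra).
  apply Rmult_le_compat; [lra | left; apply Rinv_0_lt_compat, pow_lt; lra | lra |].
  apply Rinv_le_contravar; lra.
Qed.

Lemma flux_increment_ge a b c : 0 < a <= b -> 0 <= c -> (forall x, a < x < b -> c <= f x) ->
  c * a ^ m * Rpower (u b) p * (b - a) <= flux m du b - flux m du a.
Proof.
  intros Hab Hc Hf.
  apply (is_derive_increment_ge (flux m du) (fun s => s ^ m * f s * Rpower (u s) p)); [lra | |].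
  - intros x Hx; apply flux_deriv; lra.
  - intros x Hx.
    assert (0 <= a ^ m) by (apply pow_le; lra).
    assert (a ^ m <= x ^ m) by (apply pow_incr; lra).
    assert (Rpower (u b) p <= Rpower (u x) p).
    { apply Rle_Rpower_l; [exact p_nonneg |]. split; [apply u_pos; lra | apply u_nonincreasing; lra]. }
    pose proof (Rpower_pos (u b) p).
    rewrite (Rmult_comm c).
    apply Rmult_le_compat; [apply Rmult_le_pos; lra | lra | | assumption].
    apply Rmult_le_compat; [lra | lra | lra | apply Hf; lra].
Qed.

Lemma flux_lt_u r : 0 < r -> r * flux m du (2 * r) < 3 ^ m * r ^ m * u (2 * r).
Proof.
  intros Hr.
  pose proof (u_decrement_ge (2 * r) (3 * r) ltac:(lra)) as Hdec.
  pose proof (u_pos (3 * r) ltac:(lra)).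
  assert (H3r : 0 < (3 * r) ^ m) by (apply pow_lt; lra).
  rewrite <- Rpow_mult_distr, (Rmult_comm _ (u _)).
  replace (r * flux m du (2 * r)) with (flux m du (2 * r) / (3 * r) ^ m * (3 * r - 2 * r) * (3 * r) ^ m)
    by (field; lra).
  apply Rmult_lt_compat_r; lra.
Qed.

Lemma u_le_doubling r : 0 < r -> u r <= (1 + 3 ^ m) * u (2 * r).
Proof.
  intros Hr.
  pose proof (u_decrement_le r (2 * r) ltac:(lra)) as Hdec.
  pose proof (flux_lt_u r Hr).
  assert (Hrm : 0 < r ^ m) by (apply pow_lt; lra).
  enough (flux m du (2 * r) / r ^ m * (2 * r - r) < 3 ^ m * u (2 * r)) by lra.
  apply Rmult_lt_reg_r with (r ^ m); [exact Hrm |].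
  replace (flux m du (2 * r) / r ^ m * (2 * r - r) * r ^ m) with (r * flux m du (2 * r))
    by (field; lra).
  lra.
Qed.

Lemma u_pow_bound r c : 0 < r -> 0 <= c -> (forall x, r < x < 2 * r -> c <= f x) ->
  c * r ^ 2 * Rpower (u (2 * r)) (p - 1) < 3 ^ m.
Proof.
  intros Hr Hc Hf.
  set (U := u (2 * r)).
  assert (HU : 0 < U) by (apply u_pos; lra).
  assert (Hrm : 0 < r ^ m) by (apply pow_lt; lra).
  assert (HUp : Rpower U p = U * Rpower U (p - 1)).
  { rewrite <- (Rpower_1 U) at 2 by lra. rewrite <- Rpower_plus. f_equal; ring. }
  pose proof (flux_increment_ge r (2 * r) c ltac:(lra) Hc Hf) as Hinc. fold U in Hinc.
  pose proof (flux_nonneg r Hr).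
  pose proof (flux_lt_u r Hr) as Hflux. fold U in Hflux.
  apply Rmult_lt_reg_r with (r ^ m * U); [apply Rmult_lt_0_compat; lra |].
  apply Rle_lt_trans with (r * flux m du (2 * r)); [| rewrite <- Rmult_assoc; lra].
  replace (c * r ^ 2 * Rpower U (p - 1) * (r ^ m * U))
    with (r * (c * r ^ m * Rpower U p * (2 * r - r))) by (rewrite HUp; ring).
  apply Rmult_le_compat_l; lra.
Qed.

Lemma u_decay l C1 r0 r : 1 < p -> l < 0 -> 0 < C1 -> 0 < r0 <= r ->
  (forall x, r0 < x -> C1 * Rpower x l <= f x) ->
  u r <= (1 + 3 ^ m) * Rpower (3 ^ m / (C1 * Rpower 2 l)) (/ (p - 1))
         * Rpower r (- (2 + l) / (p - 1)).
Proof.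
  intros Hp Hl HC1 Hr Hf.
  assert (Hr2 : 0 < Rpower 2 l) by apply Rpower_pos.
  assert (Hrl : 0 < Rpower r (2 + l)) by apply Rpower_pos.
  assert (Hpow : C1 * Rpower (2 * r) l * r ^ 2 = C1 * Rpower 2 l * Rpower r (2 + l)).
  { rewrite <- Rpower_mult_distr, Rpower_plus, <- (Rpower_pow 2 r) by lra.
    simpl INR. replace (1 + 1) with 2 by ring. ring. }
  assert (Hbound : C1 * Rpower (2 * r) l * r ^ 2 * Rpower (u (2 * r)) (p - 1) < 3 ^ m).
  { apply u_pow_bound; [lra | left; apply Rmult_lt_0_compat; [lra | apply Rpower_pos] |].
    intros x Hx. apply Rle_trans with (C1 * Rpower x l); [| apply Hf; lra].
    apply Rmult_le_compat_l; [lra | apply Rle_Rpower_l_npos; lra]. }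
  rewrite Hpow in Hbound.
  assert (HU : u (2 * r) < Rpower (3 ^ m / (C1 * Rpower 2 l)) (/ (p - 1))
                           * Rpower r (- (2 + l) / (p - 1))).
  { apply Rpower_lt_root; [apply u_pos; lra | lra | | lra |].
    - apply Rdiv_lt_0_compat; [apply pow_lt; lra | apply Rmult_lt_0_compat; lra].
    - rewrite Rpower_Ropp. unfold Rdiv.
      apply Rmult_lt_reg_l with (C1 * Rpower 2 l * Rpower r (2 + l));
        [apply Rmult_lt_0_compat; [apply Rmult_lt_0_compat |]; lra |].
      replace (C1 * Rpower 2 l * Rpower r (2 + l) *
                (3 ^ m * / (C1 * Rpower 2 l) * / Rpower r (2 + l))) with (3 ^ m)
        by (field; lra).
      lra. }
  pose proof (u_le_doubling r ltac:(lra)).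
  assert (0 < 1 + 3 ^ m) by (pose proof (pow_lt 3 m); lra).
  rewrite Rmult_assoc.
  apply Rle_trans with ((1 + 3 ^ m) * u (2 * r)); [assumption |].
  apply Rmult_le_compat_l; lra.
Qed.

End RadialSolution.

Lemma p_star_exponent n l p : (3 <= n)%nat -> 1 < p <= p_star n l ->
  - (2 + l) / (p - 1) <= (2 - INR n) / 2.
Proof.
  intros Hn [Hp1 Hp2].
  assert (HnR : 3 <= INR n) by (apply (le_INR 3) in Hn; simpl in Hn; lra).
  unfold p_star in Hp2.
  assert (Hp : p * (INR n - 2) <= INR n + 2 + 2 * l).
  { apply Rmult_le_reg_r with (/ (INR n - 2)); [apply Rinv_0_lt_compat; lra |].
    rewrite Rmult_assoc, Rinv_r by lra. lra. }
  apply Rmult_le_reg_r with (2 * (p - 1)); [lra |].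
  replace (- (2 + l) / (p - 1) * (2 * (p - 1))) with (- 2 * (2 + l)) by (field; lra).
  replace ((2 - INR n) / 2 * (2 * (p - 1))) with ((2 - INR n) * (p - 1)) by field.
  lra.
Qed.

Theorem lemma4p2 (n : nat) (l p : R) (f : R -> R) (r0 C1 : R) :
  (3 <= n)%nat ->
  -2 < l < 0 ->
  1 < p <= p_star n l ->
  (* (f_1) *)
  (forall r, 0 < r -> continuous f r) ->
  (forall r, 0 < r -> 0 < f r) ->
  (* (f_2): f(r) = O(r^l) as r -> oo *)
  (exists K R0, 0 < R0 /\ forall r, R0 <= r -> Rabs (f r) <= K * Rpower r l) ->
  (* (f_2'): f(r) = O(r^sigma) as r -> 0, sigma > -2 *)
  (exists sigma K delta, -2 < sigma /\ 0 < delta /\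
      forall r, 0 < r < delta -> Rabs (f r) <= K * Rpower r sigma) ->
  0 < r0 -> 0 < C1 ->
  (forall r, r0 < r -> C1 * Rpower r l <= f r) ->
  exists C, 0 < C /\
    forall (alpha : R) (u : R -> R),
      0 < alpha ->
      radial_sol n f p alpha u ->
      (forall r, 0 <= r -> 0 < u r) ->
      forall r, r0 <= r -> u r <= C * Rpower r ((2 - INR n) / 2).
Proof.
  (* Continuity of [f], (f_2) and (f_2') only matter for the existence of [u]. *)
  intros Hn Hl Hp _ Hf _ _ Hr0 HC1 Hfl.
  pose proof (p_star_exponent n l p Hn Hp) as Hexp.
  destruct n as [| m]; [lia |].
  set (e := - (2 + l) / (p - 1) - (2 - INR (S m)) / 2).
  set (K := (1 + 3 ^ m) * Rpower (3 ^ m / (C1 * Rpower 2 l)) (/ (p - 1))).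
  assert (HK : 0 < K).
  { apply Rmult_lt_0_compat; [pose proof (pow_lt 3 m); lra | apply Rpower_pos]. }
  exists (K * Rpower r0 e). split; [apply Rmult_lt_0_compat; [exact HK | apply Rpower_pos] |].
  intros alpha u _ [_ [_ [du [Hd [Hlim Hdd]]]]] Hu r Hr.
  apply Rle_trans with (K * Rpower r (- (2 + l) / (p - 1))).
  - apply (u_decay m f u du p) with (r0 := r0); try lra; auto.
    intros x Hx; apply Hu; lra.
  - replace (- (2 + l) / (p - 1)) with (e + (2 - INR (S m)) / 2) by (unfold e; ring).
    rewrite Rpower_plus, <- Rmult_assoc.
    apply Rmult_le_compat_r; [left; apply Rpower_pos |].
    apply Rmult_le_compat_l; [lra | apply Rle_Rpower_l_npos; unfold e; lra].
Qed.
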